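(* Let $\hat W$ be a first degree iMPO in regular form of bond dimension $\chi$, let $(\hat W_n)_{n\ge1}$ be generated from $\hat W_0:=\hat W$ by QR iteration with a positive rank-revealing QR ($(\hat Q_n,R_n)$ the block-respecting QR decomposition of $\hat W_{n-1}$, $\hat W_n:=R_n\hat Q_n$), and suppose the leading eigenvector $X$ of $T_V$ (left eigenvector $XT_V=X$ with $X_{00}=1$, $\hat V$ the upper-left $(1+\chi)\times(1+\chi)$ block of $\hat W$) is invertible. Then every $\hat W_n$ has the same bond dimension $\chi$ as $\hat W$.
   Context: $\mathcal A$ is the algebra of operators on $\mathbb C^q$ with inner product $\langle\hat A,\hat B\rangle=\mathrm{Tr}[\hat A^\dagger\hat B]/\mathrm{Tr}[\hat 1]$ and orthonormal basis $\{\hat O_\alpha\}$ with $\hat O_0=\hat 1$; $(W_\alpha)_{ab}=\langle\hat O_\alpha,\hat W_{ab}\rangle$ and the transfer matrix acts by $XT_W=\sum_\alpha W_\alpha^\dagger XW_\alpha$. An iMPO in regular form of bond dimension $\chi$ is a $(\chi+2)\times(\chi+2)$ matrix with entries in $\mathcal A$ of block form $\begin{pmatrix}\hat 1&\hat{\mathbf c}&\hat d\\0&\hat{\mathsf A}&\hat{\mathbf b}\\0&0&\hat 1\end{pmatrix}$ with upper-left block $\hat V=\begin{pmatrix}\hat 1&\hat{\mathbf c}\\0&\hat{\mathsf A}\end{pmatrix}$; first degree means all eigenvalues of $T_A$ have modulus $<1$. Block-respecting QR: $\hat V=\hat V'R'$ with $\hat V'=\begin{pmatrix}\hat 1&\hat{\mathbf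 c}'\\0&\hat{\mathsf A}'\end{pmatrix}$ having orthonormal columns and $R'=\begin{pmatrix}1&\mathbf t\\0&\mathsf R\end{pmatrix}$ upper triangular, and $\hat Q=\begin{pmatrix}\hat 1&\hat{\mathbf c}'&\hat d\\0&\hat{\mathsf A}'&\hat{\mathbf b}\\0&0&\hat 1\end{pmatrix}$, $R=\begin{pmatrix}1&\mathbf t&0\\0&\mathsf R&0\\0&0&1\end{pmatrix}$. Positive rank-revealing: viewing $\hat V$ as a complex $q^2(1+\chi)\times(1+\chi)$ matrix of column rank $1+\chi'$, $\hat V'$ has $1+\chi'$ columns and $R'$ has $1+\chi'$ rows, and if $\chi'=\chi$ then $R'$ has positive diagonal. *)

(* Conventions:
   - the scalar field is an abstract numClosedFieldType C (C = complex numbers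
     is the intended instance);
   - an operator-valued matrix  hat M  with entries in the operator algebra A
     on C^q is represented by its components  M : 'I_(q^2) -> 'M[C]_(_,_)
     w.r.t. the fixed orthonormal basis {O_alpha}; component index alpha with
     val alpha = 0 corresponds to O_0 = identity;
   - an iMPO of bond dimension c is  W : 'I_(q^2) -> 'M[C]_(c.+2)  (size c+2);
     index 0 is the first block, indices 1..c the middle block, c+1 the last. *)
From HB Require Import structures.
From mathcomp Require Import all_boot all_order all_algebra.
Set Implicit Arguments. Unset Strict Implicit. Unset Printing Implicit Defensive.
Import Order.TTheory GRing.Theory Num.Theory.
Local Open Scope ring_scope.

Definition adjmx (C : numClosedFieldType) m n (A : 'M[C]_(m, n)) : 'M[C]_(n, m) :=
  (map_mx Num.conj A)^T.

(* component of the identity operator: <O_alpha, 1> = delta_{alpha 0} *)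
Definition delta0 (C : numClosedFieldType) q (a : 'I_(q ^ 2)) : C :=
  (val a == 0%N)%:R.
Arguments delta0 {C q} a.

Definition transfer (C : numClosedFieldType) q k (M : 'I_(q ^ 2) -> 'M[C]_k)
  (X : 'M[C]_k) : 'M[C]_k :=
  \sum_(a : 'I_(q ^ 2)) adjmx (M a) *m X *m M a.

Definition regular_form (C : numClosedFieldType) q c
  (W : 'I_(q ^ 2) -> 'M[C]_(c.+2)) : Prop :=
  forall a : 'I_(q ^ 2),
  [/\ W a ord0 ord0 = delta0 a,
      W a ord_max ord_max = delta0 a,
      forall i : 'I_(c.+2), (0 < i)%N -> W a i ord0 = 0 &
      forall j : 'I_(c.+2), (j < c.+1)%N -> W a ord_max j = 0].

Definition Vblk (C : numClosedFieldType) q c (W : 'I_(q ^ 2) -> 'M[C]_(c.+2))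
  (a : 'I_(q ^ 2)) : 'M[C]_(c.+1) :=
  \matrix_(i < c.+1, j < c.+1) W a (inord i) (inord j).

Definition Ablk (C : numClosedFieldType) q c (W : 'I_(q ^ 2) -> 'M[C]_(c.+2))
  (a : 'I_(q ^ 2)) : 'M[C]_c :=
  \matrix_(i < c, j < c) W a (inord i.+1) (inord j.+1).

Definition first_degree (C : numClosedFieldType) q c
  (W : 'I_(q ^ 2) -> 'M[C]_(c.+2)) : Prop :=
  forall (l : C) (X : 'M[C]_c),
    X != 0 -> transfer (Ablk W) X = l *: X -> `|l| < 1.

(* column rank of hat V viewed as a complex  q^2 m x n  matrix
   (the components stacked on top of each other) *)
Definition colrank (C : numClosedFieldType) q m n
  (V : 'I_(q ^ 2) -> 'M[C]_(m, n)) : nat :=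
  \rank (@mxcol C (q ^ 2) (fun _ => m) n V).

Definition block_QR (C : numClosedFieldType) q c c'
  (V : 'I_(q ^ 2) -> 'M[C]_(c.+1))
  (V' : 'I_(q ^ 2) -> 'M[C]_(c.+1, c'.+1)) (R' : 'M[C]_(c'.+1, c.+1)) : Prop :=
  [/\ forall a, V a = V' a *m R',
      forall a, V' a ord0 ord0 = delta0 a /\
                (forall i : 'I_(c.+1), (0 < i)%N -> V' a i ord0 = 0),
      \sum_(a : 'I_(q ^ 2)) adjmx (V' a) *m V' a = 1%:M,
      R' ord0 ord0 = 1 &
      forall (i : 'I_(c'.+1)) (j : 'I_(c.+1)), (j < i)%N -> R' i j = 0].

Definition pos_rank_revealing (C : numClosedFieldType) q c c'
  (V : 'I_(q ^ 2) -> 'M[C]_(c.+1)) (R' : 'M[C]_(c'.+1, c.+1)) : Prop :=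
  colrank V = c'.+1 /\
  (c' = c -> forall i : 'I_(c'.+1), 0 < R' i (inord i)).

(* hat Q = [[1, c', d], [0, A', b], [0, 0, 1]] *)
Definition Qfull (C : numClosedFieldType) q c c'
  (W : 'I_(q ^ 2) -> 'M[C]_(c.+2)) (V' : 'I_(q ^ 2) -> 'M[C]_(c.+1, c'.+1))
  (a : 'I_(q ^ 2)) : 'M[C]_(c.+2, c'.+2) :=
  \matrix_(i < c.+2, j < c'.+2)
    if (j < c'.+1)%N then
      (if (i < c.+1)%N then V' a (inord i) (inord j) else 0)
    else W a i ord_max.

(* R = [[R', 0], [0, 1]] *)
Definition Rfull (C : numClosedFieldType) c c' (R' : 'M[C]_(c'.+1, c.+1))
  : 'M[C]_(c'.+2, c.+2) :=
  \matrix_(i < c'.+2, j < c.+2)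
    if (i < c'.+1)%N then
      (if (j < c.+1)%N then R' (inord i) (inord j) else 0)
    else (if (j == c.+1 :> nat) then 1 else 0).

Definition QR_step (C : numClosedFieldType) q c c'
  (W : 'I_(q ^ 2) -> 'M[C]_(c.+2)) (W' : 'I_(q ^ 2) -> 'M[C]_(c'.+2)) : Prop :=
  exists (V' : 'I_(q ^ 2) -> 'M[C]_(c.+1, c'.+1)) (R' : 'M[C]_(c'.+1, c.+1)),
    [/\ block_QR (Vblk W) V' R',
        pos_rank_revealing (Vblk W) R' &
        W' = fun a => Rfull R' *m Qfull W V' a].

(* An invertible fixed point X of T_V forces hat V to have full column rank:
   the block row (X^-1 V_a^dagger X)_a is a left inverse of the stacked V_a.
   Hence the rank-revealing QR keeps chi' = chi and R' is invertible, so the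
   new upper-left block R' V' = R' V R'^-1 is similar to V, and
   R'^-dagger X R'^-1 is an invertible fixed point of its transfer matrix.
   The hypothesis therefore propagates along the whole QR iteration. *)
From HB Require Import structures.
From mathcomp Require Import all_boot all_order all_algebra.
From Stdlib Require Import FunctionalExtensionality.
Set Implicit Arguments. Unset Strict Implicit. Unset Printing Implicit Defensive.
Import Order.TTheory GRing.Theory Num.Theory.
Local Open Scope ring_scope.

Section TransferMatrix.
Variables (C : numClosedFieldType) (q : nat).

Lemma adjmxM m n p (A : 'M[C]_(m, n)) (B : 'M[C]_(n, p)) :
  adjmx (A *m B) = adjmx B *m adjmx A.
Proof. by rewrite /adjmx map_mxM trmx_mul. Qed.

Lemma adjmx1 n : adjmx (1%:M : 'M[C]_n) = 1%:M.
Proof. by rewrite /adjmx map_mx1 trmx1. Qed.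

Lemma mulmx_adj_invmx n (P : 'M[C]_n) :
  P \in unitmx -> adjmx P *m adjmx (invmx P) = 1%:M.
Proof. by move=> uP; rewrite -adjmxM mulVmx // adjmx1. Qed.

Definition has_unit_fixpoint n (V : 'I_(q ^ 2) -> 'M[C]_n) : Prop :=
  exists X : 'M[C]_n, transfer V X = X /\ X \in unitmx.

Lemma colrank_full_of_unit_fixpoint n (V : 'I_(q ^ 2) -> 'M[C]_n) :
  has_unit_fixpoint V -> colrank V = n.
Proof.
case=> X [fixX uX]; apply/eqP; rewrite eqn_leq rank_leq_col /colrank.
have left_inv : \mxrow_a (invmx X *m adjmx (V a) *m X)
    *m @mxcol C (q ^ 2) (fun _ => n) n V = 1%:M.
  rewrite mul_mxrow_mxcol.
  under eq_bigr do rewrite -!mulmxA.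
  rewrite -mulmx_sumr.
  under eq_bigr do rewrite mulmxA.
  by rewrite -/(transfer V X) fixX mulVmx.
by rewrite -{1}(mxrank1 C n) -left_inv mxrankM_maxr.
Qed.

Lemma colrank_mulmxr m n (V : 'I_(q ^ 2) -> 'M[C]_(m, n)) (R : 'M[C]_n) :
  (colrank (fun a => V a *m R) <= \rank R)%N.
Proof. by rewrite /colrank -mxcol_mul mxrankM_maxr. Qed.

Lemma unitmx_of_full_colrank n (V V' : 'I_(q ^ 2) -> 'M[C]_n) (R : 'M[C]_n) :
  (forall a, V a = V' a *m R) -> colrank V = n -> R \in unitmx.
Proof.
move=> defV fullV; rewrite -row_free_unit /row_free eqn_leq rank_leq_col.
by rewrite -{1}fullV (functional_extensionality _ _ defV) colrank_mulmxr.
Qed.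

Lemma transfer_conj n (V : 'I_(q ^ 2) -> 'M[C]_n) (P X : 'M[C]_n) :
  P \in unitmx ->
  transfer (fun a => P *m V a *m invmx P) (adjmx (invmx P) *m X *m invmx P)
  = adjmx (invmx P) *m transfer V X *m invmx P.
Proof.
move=> uP; rewrite /transfer mulmx_sumr mulmx_suml; apply: eq_bigr=> a _.
rewrite !adjmxM !mulmxA -[_ *m adjmx P *m _]mulmxA mulmx_adj_invmx // mulmx1.
by rewrite -[_ *m invmx P *m P]mulmxA mulVmx // mulmx1.
Qed.

Lemma has_unit_fixpoint_conj n (V : 'I_(q ^ 2) -> 'M[C]_n) (P : 'M[C]_n) :
  P \in unitmx -> has_unit_fixpoint V ->
  has_unit_fixpoint (fun a => P *m V a *m invmx P).
Proof.
move=> uP [X [fixX uX]]; exists (adjmx (invmx P) *m X *m invmx P).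
rewrite transfer_conj // fixX; split=> //.
rewrite !unitmx_mul uX unitmx_inv uP !andbT.
have uPinv : invmx P \in unitmx by rewrite unitmx_inv.
by have [] := mulmx1_unit (mulmx_adj_invmx uPinv).
Qed.

End TransferMatrix.

Lemma Vblk_mul_Rfull_Qfull (C : numClosedFieldType) q c c'
  (W : 'I_(q ^ 2) -> 'M[C]_(c.+2)) (V' : 'I_(q ^ 2) -> 'M[C]_(c.+1, c'.+1))
  (R' : 'M[C]_(c'.+1, c.+1)) a :
  Vblk (fun a => Rfull R' *m Qfull W V' a) a = R' *m V' a.
Proof.
apply/matrixP=> i j; rewrite !mxE big_ord_recr /=.
have vi : nat_of_ord (inord i : 'I_(c'.+2)) = i by rewrite inordK // ltnS ltnW.
have vj : nat_of_ord (inord j : 'I_(c'.+2)) = j by rewrite inordK // ltnS ltnW.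
rewrite !mxE vi vj ltn_ord /= ltnn mul0r addr0.
by apply: eq_bigr=> k _; rewrite !mxE /= vi vj !ltn_ord !inord_val.
Qed.

Lemma QR_step_unit_fixpoint (C : numClosedFieldType) q c c'
  (W : 'I_(q ^ 2) -> 'M[C]_(c.+2)) (W' : 'I_(q ^ 2) -> 'M[C]_(c'.+2)) :
  QR_step W W' -> has_unit_fixpoint (Vblk W) ->
  c' = c /\ has_unit_fixpoint (Vblk W').
Proof.
case=> V' [R' [[defV _ _ _ _] [rankV _] ->]] fixW.
have fullV := colrank_full_of_unit_fixpoint fixW.
have eq_c : c' = c by move: rankV; rewrite fullV => -[].
subst c'; split=> //.
have uR := unitmx_of_full_colrank defV fullV.
have -> : Vblk (fun a => Rfull R' *m Qfull W V' a)
          = fun a => R' *m Vblk W a *m invmx R'.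
  by apply: functional_extensionality=> a; rewrite Vblk_mul_Rfull_Qfull defV mulmxA mulmxK.
exact: has_unit_fixpoint_conj.
Qed.

Theorem lemma8 (C : numClosedFieldType) (q c : nat) (hq : (0 < q)%N)
  (W : 'I_(q ^ 2) -> 'M[C]_(c.+2)) :
  regular_form W ->
  first_degree W ->
  (exists X : 'M[C]_(c.+1),
      [/\ transfer (Vblk W) X = X, X ord0 ord0 = 1 & X \in unitmx]) ->
  forall Ws : nat -> {c' : nat & 'I_(q ^ 2) -> 'M[C]_(c'.+2)},
    Ws 0%N = existT _ c W ->
    (forall n : nat, QR_step (projT2 (Ws n)) (projT2 (Ws n.+1))) ->
    forall n : nat, projT1 (Ws n) = c.
Proof.
move=> _ _ [X [fixX _ uX]] Ws Ws0 stepWs.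
suff inv n : projT1 (Ws n) = c /\ has_unit_fixpoint (Vblk (projT2 (Ws n))).
  by move=> n; case: (inv n).
elim: n => [|n [dim_n fixWn]]; first by rewrite Ws0; split=> //; exists X.
have [dim_n1 fixWn1] := QR_step_unit_fixpoint (stepWs n) fixWn.
by split=> //; rewrite dim_n1.
Qed.
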